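(* Assume $(g,\mathfrak{D})$ satisfy B1–B3 with constant $\kappa>0$. Then for every $X\in\mathbb{R}^{m\times n}$ and all $D'\neq D\in\mathfrak{D}$, $$\frac{|F_X(D')-F_X(D)|}{\|D'-D\|_{1\to2}}\le L_X(\bar g)\Big(1+\frac{1}{\sqrt\kappa}\|D'-D\|_{1\to2}\Big).$$
   Context: $\mathfrak{D}\subset\mathbb{R}^{m\times d}$. B1: $g=\chi_{\mathcal K}$ is the indicator of a set $\mathcal K\subset\mathbb{R}^d$ ($0$ on $\mathcal K$, $+\infty$ outside); B2: $\kappa\|\alpha\|_1^2\le\|D\alpha\|_2^2$ for all $\alpha\in\mathcal K$, $D\in\mathfrak{D}$; B3: $0\in\mathcal K$. $\mathcal{L}_x(D,\alpha)=\tfrac12\|x-D\alpha\|_2^2+g(\alpha)$, $f_x(D)=\inf_\alpha\mathcal{L}_x(D,\alpha)$, $F_X(D)=\frac1n\sum_i f_{x_i}(D)$. $\|\Delta\|_{1\to2}=\max_j\|\delta_j\|_2$. $\bar g(t)=2\sqrt{2t/\kappa}$ and $L_X(\bar g)=\frac1n\sum_i\|x_i\|_2\bar g(\|x_i\|_2^2/2)=\frac{2}{n\sqrt\kappa}\|X\|_F^2$. *)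

From Stdlib Require Import Reals ClassicalEpsilon.
From mathcomp Require Import ssreflect ssrfun ssrbool eqtype ssrnat seq fintype.

Set Implicit Arguments.
Unset Strict Implicit.
Local Open Scope R_scope.

Definition osum (k : nat) (f : 'I_k -> R) : R :=
  foldr (fun j acc => f j + acc) 0 (enum 'I_k).

(* vectors in R^k are functions 'I_k -> R ; m x d matrices are 'I_m -> 'I_d -> R *)
Definition norm2 (k : nat) (v : 'I_k -> R) : R := sqrt (osum (fun i => pow (v i) 2)).
Definition norm1 (k : nat) (v : 'I_k -> R) : R := osum (fun i => Rabs (v i)).

Definition matvec (m d : nat) (D : 'I_m -> 'I_d -> R) (a : 'I_d -> R) : 'I_m -> R :=
  fun i => osum (fun j => D i j * a j).

Definition matsub (m d : nat) (A B : 'I_m -> 'I_d -> R) : 'I_m -> 'I_d -> R :=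
  fun i j => A i j - B i j.

(* ||Delta||_{1->2} = max_j ||delta_j||_2 (columns); max over an empty set taken as 0 *)
Definition norm12 (m d : nat) (A : 'I_m -> 'I_d -> R) : R :=
  foldr (fun j acc => Rmax (norm2 (fun i => A i j)) acc) 0 (enum 'I_d).

Definition is_glb (S : R -> Prop) (v : R) : Prop :=
  (forall y, S y -> v <= y) /\ (forall w, (forall y, S y -> w <= y) -> w <= v).

Definition Rinf (S : R -> Prop) : R := epsilon (inhabits 0) (is_glb S).

(* f_x(D) = inf_alpha 1/2 ||x - D alpha||^2 + chi_K(alpha)
          = inf over alpha in K of 1/2 ||x - D alpha||^2 *)
Definition fx (m d : nat) (K : ('I_d -> R) -> Prop) (x : 'I_m -> R)
  (D : 'I_m -> 'I_d -> R) : R :=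
  Rinf (fun v => exists a, K a /\ v = / 2 * pow (norm2 (fun i => x i - matvec D a i)) 2).

Definition col (m n : nat) (X : 'I_m -> 'I_n -> R) (i : 'I_n) : 'I_m -> R :=
  fun r => X r i.

Definition FX (m d n : nat) (K : ('I_d -> R) -> Prop) (X : 'I_m -> 'I_n -> R)
  (D : 'I_m -> 'I_d -> R) : R :=
  / INR n * osum (fun i => fx K (col X i) D).

Definition gbar (kappa t : R) : R := 2 * sqrt (2 * t / kappa).

Definition LX (m n : nat) (kappa : R) (X : 'I_m -> 'I_n -> R) : R :=
  / INR n * osum (fun i => norm2 (col X i) * gbar kappa (pow (norm2 (col X i)) 2 / 2)).

(* Fix a sample x and write phi_D(a) = 1/2 ||x - D a||^2, so f_x(D) is the
   infimum of phi_D over K.  Since 0 is in K (B3), f_x(D) <= 1/2 ||x||^2, and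
   it suffices to compare phi_D' and phi_D at points a in K with
   phi_D(a) <= phi_D(0).  For such a, ||D a|| <= 2 ||x||, so B2 gives
   ||a||_1 <= 2 ||x|| / sqrt kappa, and therefore
   ||(D' - D) a|| <= ||D' - D||_{1->2} ||a||_1 is small.  Expanding the square
   yields phi_D'(a) <= phi_D(a) + c with c = ||x|| gbar(||x||^2/2) d (1 + d/sqrt kappa),
   d = ||D' - D||_{1->2}; points with phi_D(a) > phi_D(0) are dominated by a = 0.
   Hence f_x(D') <= f_x(D) + c, and by symmetry |f_x(D') - f_x(D)| <= c.
   Averaging over the columns of X and dividing by d gives the theorem. *)
From Stdlib Require Import Reals Lra Psatz ClassicalEpsilon.
From mathcomp Require Import ssreflect ssrfun ssrbool eqtype ssrnat seq fintype.

Local Open Scope R_scope.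

Definition lsum {T : Type} (s : seq T) (f : T -> R) : R :=
  foldr (fun j acc => f j + acc) 0 s.

Lemma osumE (k : nat) (f : 'I_k -> R) : osum f = lsum (enum 'I_k) f.
Proof. by []. Qed.

Section ListSums.
Context {T : Type}.
Implicit Types (s : seq T) (f g : T -> R).

Lemma lsum_nil f : lsum [::] f = 0.
Proof. by []. Qed.

Lemma lsum_cons x s f : lsum (x :: s) f = f x + lsum s f.
Proof. by []. Qed.

Lemma lsum_ext s f g : (forall x, f x = g x) -> lsum s f = lsum s g.
Proof. by move=> efg; elim: s => [|x s IH] //; rewrite !lsum_cons IH efg. Qed.

Lemma lsum0 s : lsum s (fun _ => 0) = 0.
Proof. by elim: s => [|x s IH] //; rewrite lsum_cons IH Rplus_0_r. Qed.

Lemma lsumD s f g : lsum s (fun x => f x + g x) = lsum s f + lsum s g.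
Proof. by elim: s => [|x s IH]; rewrite ?lsum_nil ?lsum_cons ?IH; ring. Qed.

Lemma lsumB s f g : lsum s (fun x => f x - g x) = lsum s f - lsum s g.
Proof. by elim: s => [|x s IH]; rewrite ?lsum_nil ?lsum_cons ?IH; ring. Qed.

Lemma lsumZ s c f : lsum s (fun x => c * f x) = c * lsum s f.
Proof. by elim: s => [|x s IH]; rewrite ?lsum_nil ?lsum_cons ?IH; ring. Qed.

Lemma lsum_le s f g : (forall x, f x <= g x) -> lsum s f <= lsum s g.
Proof.
move=> hfg; elim: s => [|x s IH]; rewrite ?lsum_nil ?lsum_cons; first lra.
by have := hfg x; lra.
Qed.

Lemma lsum_ge0 s f : (forall x, 0 <= f x) -> 0 <= lsum s f.
Proof. by move=> hf; rewrite -(lsum0 s); apply: lsum_le. Qed.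

Lemma lsum_abs s f : Rabs (lsum s f) <= lsum s (fun x => Rabs (f x)).
Proof.
elim: s => [|x s IH]; rewrite ?lsum_nil ?lsum_cons; first by rewrite Rabs_R0; lra.
by have := Rabs_triang (f x) (lsum s f); lra.
Qed.

(* The inductive step of Cauchy-Schwarz: appending one coordinate preserves it. *)
Lemma cauchy_schwarz_step (S P Q a b : R) : 0 <= P -> 0 <= Q -> S * S <= P * Q ->
  (a * b + S) * (a * b + S) <= (a * a + P) * (b * b + Q).
Proof.
move=> hP hQ hS.
have cross2 : (S * a * b) * (S * a * b) <= (P * (b * b)) * (Q * (a * a)).
  replace ((S * a * b) * (S * a * b)) with ((S * S) * (a * a * (b * b))) by ring.
  replace ((P * (b * b)) * (Q * (a * a))) with ((P * Q) * (a * a * (b * b))) by ring.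
  by apply: Rmult_le_compat_r; nra.
have cross : 2 * (S * a * b) <= P * (b * b) + Q * (a * a).
  apply: Rsqr_incr_0_var; rewrite /Rsqr; last nra.
  by have := Rle_0_sqr (P * (b * b) - Q * (a * a)); rewrite /Rsqr; nra.
nra.
Qed.

Lemma cauchy_schwarz s f g :
  lsum s (fun x => f x * g x) * lsum s (fun x => f x * g x)
  <= lsum s (fun x => f x * f x) * lsum s (fun x => g x * g x).
Proof.
elim: s => [|x s IH]; first by rewrite !lsum_nil; lra.
have sq_f : 0 <= lsum s (fun y => f y * f y) by apply: lsum_ge0 => y; nra.
have sq_g : 0 <= lsum s (fun y => g y * g y) by apply: lsum_ge0 => y; nra.
exact: cauchy_schwarz_step sq_f sq_g IH.
Qed.

End ListSums.

Arguments lsum_ext {T s f} g.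

Section EuclideanNorm.
Context {k : nat}.
Implicit Types u v : 'I_k -> R.

Definition sqnorm v : R := lsum (enum 'I_k) (fun i => v i ^ 2).
Definition dot u v : R := lsum (enum 'I_k) (fun i => u i * v i).

Lemma sqnorm_ge0 v : 0 <= sqnorm v.
Proof. by apply: lsum_ge0 => i; apply: pow2_ge_0. Qed.

Lemma norm2_ge0 v : 0 <= norm2 v.
Proof. exact: sqrt_pos. Qed.

Lemma norm2_sqr v : norm2 v ^ 2 = sqnorm v.
Proof. by rewrite /norm2 osumE /= Rmult_1_r sqrt_sqrt //; apply: sqnorm_ge0. Qed.

Lemma dot_self v : dot v v = norm2 v ^ 2.
Proof. by rewrite norm2_sqr; apply: lsum_ext => i /=; ring. Qed.

Lemma norm2_ext u v : (forall i, u i = v i) -> norm2 u = norm2 v.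
Proof. by move=> euv; rewrite /norm2 !osumE (lsum_ext (fun i => v i ^ 2)) // => i; rewrite euv. Qed.

Arguments norm2_ext {u} v.

Lemma norm2_zero : norm2 (fun _ : 'I_k => 0) = 0.
Proof.
rewrite /norm2 osumE (lsum_ext (fun _ => 0)) ?lsum0 ?sqrt_0 // => i /=; ring.
Qed.

Lemma norm2_scale c v : norm2 (fun i => c * v i) = Rabs c * norm2 v.
Proof.
rewrite /norm2 !osumE (lsum_ext (fun i => (c * c) * v i ^ 2)); last by move=> i /=; ring.
rewrite lsumZ sqrt_mult_alt; last by nra.
by rewrite -/(Rsqr c) sqrt_Rsqr_abs.
Qed.

Lemma dot_le u v : dot u v <= norm2 u * norm2 v.
Proof.
apply: Rsqr_incr_0_var; last by apply: Rmult_le_pos; apply: norm2_ge0.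
have := cauchy_schwarz (enum 'I_k) u v; rewrite -/(dot u v) -/(dot u u) -/(dot v v) !dot_self.
by rewrite /Rsqr /=; lra.
Qed.

Lemma norm2_triangle u v : norm2 (fun i => u i + v i) <= norm2 u + norm2 v.
Proof.
apply: Rsqr_incr_0_var; last by have := norm2_ge0 u; have := norm2_ge0 v; lra.
have expand : norm2 (fun i => u i + v i) ^ 2 = norm2 u ^ 2 + norm2 v ^ 2 + 2 * dot u v.
  by rewrite !norm2_sqr /sqnorm -lsumZ -!lsumD; apply: lsum_ext => i /=; ring.
have := dot_le u v; move: expand; rewrite /Rsqr /=; lra.
Qed.

Lemma norm2_sub_le u v : norm2 (fun i => u i - v i) <= norm2 u + norm2 v.
Proof.
rewrite (norm2_ext (fun i => u i + (-1) * v i)); last by move=> i; ring.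
by have := norm2_triangle u (fun i => (-1) * v i); rewrite norm2_scale Rabs_Ropp Rabs_R1; lra.
Qed.

Lemma norm2_opp_sub u v : norm2 (fun i => u i - v i) = norm2 (fun i => v i - u i).
Proof.
rewrite (norm2_ext (fun i => (-1) * (v i - u i))); last by move=> i; ring.
by rewrite norm2_scale Rabs_Ropp Rabs_R1 Rmult_1_l.
Qed.

Lemma norm2_lsum_le {T : Type} (s : seq T) (c : T -> R) (w : T -> 'I_k -> R) :
  norm2 (fun i => lsum s (fun j => c j * w j i))
  <= lsum s (fun j => Rabs (c j) * norm2 (w j)).
Proof.
elim: s => [|j s IH]; first by rewrite lsum_nil /lsum norm2_zero; lra.
apply: Rle_trans (norm2_triangle (fun i => c j * w j i) (fun i => lsum s (fun j => c j * w j i))) _.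
by rewrite lsum_cons norm2_scale; lra.
Qed.

End EuclideanNorm.

Arguments norm2_ext {k u} v.

Lemma norm1_ge0 {d : nat} (a : 'I_d -> R) : 0 <= norm1 a.
Proof. by apply: lsum_ge0 => j; apply: Rabs_pos. Qed.

Lemma norm12_col {m d : nat} (A : 'I_m -> 'I_d -> R) (j : 'I_d) :
  norm2 (fun i => A i j) <= norm12 A.
Proof.
rewrite /norm12; have : j \in enum 'I_d by rewrite mem_enum.
elim: (enum 'I_d) => [|x s IH] //=; rewrite in_cons => /orP [/eqP <- | js].
- exact: Rmax_l.
- exact: Rle_trans (IH js) (Rmax_r _ _).
Qed.

Lemma norm12_ge0 {m d : nat} (A : 'I_m -> 'I_d -> R) : 0 <= norm12 A.
Proof.
rewrite /norm12; elim: (enum 'I_d) => [|x s IH] /=; first lra.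
exact: Rle_trans IH (Rmax_r _ _).
Qed.

Lemma norm2_matvec_le {m d : nat} (A : 'I_m -> 'I_d -> R) (a : 'I_d -> R) (del : R) :
  (forall j, norm2 (fun i => A i j) <= del) -> norm2 (matvec A a) <= del * norm1 a.
Proof.
move=> hcol; rewrite (norm2_ext (fun i => lsum (enum 'I_d) (fun j => a j * A i j))).
  apply: Rle_trans (norm2_lsum_le (enum 'I_d) a (fun j i => A i j)) _.
  rewrite /norm1 osumE -lsumZ; apply: lsum_le => j; rewrite [del * _]Rmult_comm.
  by apply: Rmult_le_compat_l; [apply: Rabs_pos | apply: hcol].
by move=> i; rewrite /matvec osumE; apply: lsum_ext => j; ring.
Qed.

Lemma matvec_sub {m d : nat} (D D' : 'I_m -> 'I_d -> R) (a : 'I_d -> R) (i : 'I_m) :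
  matvec D' a i = matvec D a i + matvec (matsub D' D) a i.
Proof. by rewrite /matvec !osumE -lsumD; apply: lsum_ext => j; rewrite /matsub; ring. Qed.

Lemma matvec0 {m d : nat} (D : 'I_m -> 'I_d -> R) (i : 'I_m) :
  matvec D (fun _ => 0) i = 0.
Proof. by rewrite /matvec osumE (lsum_ext (fun _ => 0)) ?lsum0 // => j; ring. Qed.

Lemma Rinf_glb (S : R -> Prop) :
  (exists y, S y) -> (exists lb, forall y, S y -> lb <= y) -> is_glb S (Rinf S).
Proof.
move=> [y0 Sy0] [lb hlb]; apply: epsilon_spec.
have bounded : bound (fun z => S (- z)).
  by exists (- lb) => z Sz; have := hlb _ Sz; lra.
have nonempty : exists z, S (- z) by exists (- y0); rewrite Ropp_involutive.
case: (completeness _ bounded nonempty) => M [Mub Mleast]; exists (- M); split.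
- move=> y Sy; suff : - y <= M by lra.
  by apply: Mub; rewrite Ropp_involutive.
- move=> w hw; suff : M <= - w by lra.
  by apply: Mleast => z Sz; have := hw _ Sz; lra.
Qed.

Section OneSample.
Context {m d : nat} {K : ('I_d -> R) -> Prop} {x : 'I_m -> R}.
Hypothesis K0 : K (fun _ => 0).

Definition fit (D : 'I_m -> 'I_d -> R) (a : 'I_d -> R) : R :=
  / 2 * norm2 (fun i => x i - matvec D a i) ^ 2.

Lemma fit_zero (D : 'I_m -> 'I_d -> R) : fit D (fun _ => 0) = / 2 * norm2 x ^ 2.
Proof. by rewrite /fit (norm2_ext x) // => i; rewrite matvec0 Rminus_0_r. Qed.

Lemma fx_glb (D : 'I_m -> 'I_d -> R) :
  is_glb (fun v => exists a, K a /\ v = fit D a) (fx K x D).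
Proof.
apply: Rinf_glb; first by exists (fit D (fun _ => 0)), (fun _ => 0).
by exists 0 => _ [a [_ ->]]; rewrite /fit; have := pow2_ge_0 (norm2 (fun i => x i - matvec D a i)); lra.
Qed.

Lemma fx_le_fit (D : 'I_m -> 'I_d -> R) (a : 'I_d -> R) : K a -> fx K x D <= fit D a.
Proof. by move=> Ka; apply: (proj1 (fx_glb D)); exists a. Qed.

Lemma residual_le_of_fit_le (D : 'I_m -> 'I_d -> R) (a : 'I_d -> R) :
  fit D a <= fit D (fun _ => 0) -> norm2 (fun i => x i - matvec D a i) <= norm2 x.
Proof.
rewrite fit_zero /fit /= => hfit.
by apply: Rsqr_incr_0_var; [rewrite /Rsqr; lra | apply: norm2_ge0].
Qed.

Lemma norm1_le_of_fit_le (kappa : R) (D : 'I_m -> 'I_d -> R) (a : 'I_d -> R) :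
  0 < kappa -> kappa * norm1 a ^ 2 <= norm2 (matvec D a) ^ 2 ->
  fit D a <= fit D (fun _ => 0) -> sqrt kappa * norm1 a <= 2 * norm2 x.
Proof.
move=> hk B2a /residual_le_of_fit_le res_le.
have Da_le : norm2 (matvec D a) <= 2 * norm2 x.
  rewrite (norm2_ext (fun i => x i - (x i - matvec D a i))); last by move=> i; ring.
  by have := norm2_sub_le x (fun i => x i - matvec D a i); lra.
apply: Rsqr_incr_0_var; last by have := norm2_ge0 x; lra.
have sqrt_sq : sqrt kappa * sqrt kappa = kappa by apply: sqrt_sqrt; lra.
have -> : (sqrt kappa * norm1 a)² = kappa * norm1 a ^ 2.
  by rewrite /Rsqr -[in RHS]sqrt_sq /=; ring.
apply: Rle_trans B2a _; rewrite /Rsqr /=.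
by rewrite Rmult_1_r; apply: Rmult_le_compat; try apply: norm2_ge0.
Qed.

(* The increment ||x|| gbar(||x||^2/2) del (1 + del/sqrt kappa), written out. *)
Definition increment (kappa del xn : R) : R :=
  2 * xn ^ 2 / sqrt kappa * (del * (1 + / sqrt kappa * del)).

(* The increment is nonnegative, so a = 0 is never penalized. *)
Lemma increment_ge0 (kappa del xn : R) : 0 < kappa -> 0 <= del -> 0 <= increment kappa del xn.
Proof.
move=> hk hdel; have inv_ge0 := Rlt_le _ _ (Rinv_0_lt_compat _ (sqrt_lt_R0 _ hk)).
have := pow2_ge_0 xn; rewrite /increment /Rdiv => xn2_ge0.
apply: Rmult_le_pos; first by apply: Rmult_le_pos => //; lra.
by apply: Rmult_le_pos => //; nra.
Qed.

(* Moving the dictionary by at most del per column raises phi at a near-optimal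
   point a by at most the increment: ||x - D' a|| <= ||x - D a|| + ||(D' - D) a||,
   with ||(D' - D) a|| <= del ||a||_1 <= 2 del ||x|| / sqrt kappa. *)
Lemma fit_perturb (kappa del : R) (D D' : 'I_m -> 'I_d -> R) (a : 'I_d -> R) :
  0 < kappa -> kappa * norm1 a ^ 2 <= norm2 (matvec D a) ^ 2 ->
  fit D a <= fit D (fun _ => 0) -> 0 <= del ->
  (forall j, norm2 (fun i => matsub D' D i j) <= del) ->
  fit D' a <= fit D a + increment kappa del (norm2 x).
Proof.
move=> hk B2a near hdel hcol; have hs := sqrt_lt_R0 _ hk.
set r := norm2 (fun i => x i - matvec D a i).
set w := norm2 (matvec (matsub D' D) a).
set bound := del * (2 * norm2 x / sqrt kappa).
have r_le : r <= norm2 x by apply: residual_le_of_fit_le.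
have w_le : w <= bound.
  apply: Rle_trans (norm2_matvec_le _ a _ hcol) _; apply: Rmult_le_compat_l => //.
  apply: (Rmult_le_reg_l (sqrt kappa)) => //; rewrite /Rdiv -Rmult_assoc Rinv_r_simpl_m; last lra.
  exact: norm1_le_of_fit_le _ _ _ hk B2a near.
have res'_le : norm2 (fun i => x i - matvec D' a i) <= r + w.
  rewrite (norm2_ext (fun i => (x i - matvec D a i) - matvec (matsub D' D) a i)).
    exact: norm2_sub_le.
  by move=> i; rewrite (matvec_sub D); ring.
have incr_eq : increment kappa del (norm2 x) = norm2 x * bound + / 2 * (bound * bound).
  by rewrite /increment /bound /=; field; lra.
have r_ge0 : 0 <= r by apply: norm2_ge0.
have w_ge0 : 0 <= w by apply: norm2_ge0.
have res'_ge0 := norm2_ge0 (fun i => x i - matvec D' a i).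
rewrite /fit -/r incr_eq /=.
have : r * w <= norm2 x * bound by apply: Rmult_le_compat.
have : w * w <= bound * bound by apply: Rmult_le_compat.
nra.
Qed.

(* Infimum comparison: a point a with phi_D(a) > phi_D(0) is dominated by
   a = 0, so fx(D') - increment is a lower bound for every value phi_D(a). *)
Lemma fx_perturb (kappa del : R) (D D' : 'I_m -> 'I_d -> R) :
  0 < kappa -> (forall a, K a -> kappa * norm1 a ^ 2 <= norm2 (matvec D a) ^ 2) ->
  0 <= del -> (forall j, norm2 (fun i => matsub D' D i j) <= del) ->
  fx K x D' <= fx K x D + increment kappa del (norm2 x).
Proof.
move=> hk B2D hdel hcol; have incr_ge0 := increment_ge0 _ _ (norm2 x) hk hdel.
suff : fx K x D' - increment kappa del (norm2 x) <= fx K x D by lra.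
apply: (proj2 (fx_glb D)) => _ [a [Ka ->]].
case: (Rle_or_lt (fit D a) (fit D (fun _ => 0))) => [near | far].
- have := fit_perturb _ _ _ _ _ hk (B2D a Ka) near hdel hcol.
  by have := fx_le_fit D' _ Ka; lra.
- have := fx_le_fit D' _ K0; rewrite !fit_zero in far *; lra.
Qed.

End OneSample.

Lemma fx_lipschitz {m d : nat} {K : ('I_d -> R) -> Prop} {kappa : R}
  {D D' : 'I_m -> 'I_d -> R} (x : 'I_m -> R) :
  0 < kappa -> K (fun _ => 0) ->
  (forall a, K a -> kappa * norm1 a ^ 2 <= norm2 (matvec D a) ^ 2) ->
  (forall a, K a -> kappa * norm1 a ^ 2 <= norm2 (matvec D' a) ^ 2) ->
  Rabs (fx K x D' - fx K x D) <= increment kappa (norm12 (matsub D' D)) (norm2 x).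
Proof.
move=> hk K0 B2D B2D'; have hdel := norm12_ge0 (matsub D' D).
have col_le j : norm2 (fun i => matsub D' D i j) <= norm12 (matsub D' D) by apply: norm12_col.
have col_le' j : norm2 (fun i => matsub D D' i j) <= norm12 (matsub D' D).
  by rewrite /matsub norm2_opp_sub; apply: col_le.
apply: Rabs_le; split.
- by have := fx_perturb (x := x) K0 _ _ _ _ hk B2D' hdel col_le'; lra.
- by have := fx_perturb (x := x) K0 _ _ _ _ hk B2D hdel col_le; lra.
Qed.

(* ||x|| gbar(||x||^2/2) = 2 ||x||^2 / sqrt kappa, so increment is the per-sample
   term of L_X(gbar) times del (1 + del / sqrt kappa). *)
Lemma mul_gbar (kappa xn : R) : 0 < kappa -> 0 <= xn ->
  xn * gbar kappa (xn ^ 2 / 2) = 2 * xn ^ 2 / sqrt kappa.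
Proof.
move=> hk hxn; rewrite /gbar.
have -> : 2 * (xn ^ 2 / 2) / kappa = (xn * xn) * / kappa by rewrite /=; field; lra.
rewrite sqrt_mult_alt; last nra.
rewrite sqrt_square // sqrt_inv /=; field.
by apply: Rgt_not_eq; apply: sqrt_lt_R0.
Qed.

(* The normalization 1/n is nonnegative (also for n = 0, where / 0 = 0). *)
Lemma inv_INR_ge0 (n : nat) : 0 <= / INR n.
Proof.
by case: n => [|n]; [rewrite Rinv_0; lra | apply/Rlt_le/Rinv_0_lt_compat/lt_0_INR; lia].
Qed.

Lemma mean_diff_le (n : nat) (f g h : 'I_n -> R) :
  (forall i, Rabs (f i - g i) <= h i) ->
  Rabs (/ INR n * osum f - / INR n * osum g) <= / INR n * osum h.
Proof.
move=> hfg; have inv_ge0 := inv_INR_ge0 n.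
rewrite !osumE -Rmult_minus_distr_l -lsumB Rabs_mult Rabs_pos_eq //.
apply: Rmult_le_compat_l => //; apply: Rle_trans (lsum_abs _ _) _.
exact: lsum_le.
Qed.

(* Dividing a bound of the form del * b by del >= 0 (with a / 0 = 0). *)
Lemma div_le_of_le_mul (a b del : R) : 0 <= del -> 0 <= b -> a <= del * b -> a / del <= b.
Proof.
move=> hdel hb hab; case: (Req_dec del 0) => [-> | del_ne0].
- by rewrite /Rdiv Rinv_0 Rmult_0_r.
- apply: (Rmult_le_reg_r del); first lra.
  by rewrite /Rdiv Rmult_assoc Rinv_l // Rmult_1_r Rmult_comm.
Qed.

Theorem mainTheorem10 (m d n : nat) (kappa : R)
  (K : ('I_d -> R) -> Prop) (Dset : ('I_m -> 'I_d -> R) -> Prop)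
  (hkappa : 0 < kappa)
  (B2 : forall (a : 'I_d -> R) (D : 'I_m -> 'I_d -> R), K a -> Dset D ->
          kappa * pow (norm1 a) 2 <= pow (norm2 (matvec D a)) 2)
  (B3 : K (fun _ => 0))
  (X : 'I_m -> 'I_n -> R) (D D' : 'I_m -> 'I_d -> R)
  (hD : Dset D) (hD' : Dset D') (hne : D' <> D) :
  Rabs (FX K X D' - FX K X D) / norm12 (matsub D' D)
  <= LX kappa X * (1 + / sqrt kappa * norm12 (matsub D' D)).
(* Per sample |f_x(D') - f_x(D)| <= ||x|| gbar(||x||^2/2) c del with
   c = 1 + del / sqrt kappa; average over the samples and divide by del. *)
Proof.
set del := norm12 (matsub D' D); have hdel : 0 <= del by apply: norm12_ge0.
have inv_sqrt_pos : 0 < / sqrt kappa by apply/Rinv_0_lt_compat/sqrt_lt_R0.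
set c := 1 + / sqrt kappa * del.
have c_ge0 : 0 <= c by rewrite /c; nra.
pose L := fun i => norm2 (col X i) * gbar kappa (norm2 (col X i) ^ 2 / 2).
have L_eq i : L i = 2 * norm2 (col X i) ^ 2 / sqrt kappa.
  by apply: mul_gbar => //; apply: norm2_ge0.
have LX_eq : LX kappa X = / INR n * osum L by [].
have LX_ge0 : 0 <= LX kappa X.
  rewrite LX_eq; apply: Rmult_le_pos; first exact: inv_INR_ge0.
  by apply: lsum_ge0 => i; rewrite L_eq /Rdiv; have := pow2_ge_0 (norm2 (col X i)); nra.
have per_sample i : Rabs (fx K (col X i) D' - fx K (col X i) D) <= (c * del) * L i.
  have := fx_lipschitz (col X i) hkappa B3 (fun a Ka => B2 a D Ka hD) (fun a Ka => B2 a D' Ka hD').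
  by rewrite /increment L_eq -/del -/c; lra.
apply: div_le_of_le_mul => //; first exact: Rmult_le_pos.
have -> : del * (LX kappa X * c) = / INR n * osum (fun i => (c * del) * L i).
  by rewrite LX_eq !osumE lsumZ; ring.
exact: mean_diff_le.
Qed.
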